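(* For every class $K$ of algebras of type $\tau$, $$H\mathbf Q(K)=\mathbf S\mathbf P_r\mathbf D(K_0),$$ where $K_0$ is $K$ together with a trivial (one-element) algebra of type $\tau$.
   Context: A hypersubstitution $\sigma$ of type $\tau$ assigns to each $n$-ary operation symbol an $n$-ary term of type $\tau$, extended to all terms; the derived algebra $\mathbf A^\sigma$ replaces each fundamental operation $f_\gamma$ of $\mathbf A$ by $\sigma(f_\gamma)^{\mathbf A}$, and $\mathbf D(K)$ is the class of all derived algebras of members of $K$. A hyper-quasi-identity $\bigwedge_{i<n}(t_i=s_i)\to(t_n=s_n)$ is hypersatisfied in $\mathbf A$ if for every hypersubstitution $\sigma$ the quasi-identity $\bigwedge_{i<n}(\sigma(t_i)=\sigma(s_i))\to(\sigma(t_n)=\sigma(s_n))$ holds in $\mathbf A$. $H\mathbf Q(K)$ is the class of all algebras of type $\tau$ hypersatisfying every hyper-quasi-identity hypersatisfied in all members of $K$. $\mathbf S$ denotes closure under isomorphic copies of subalgebras and $\mathbf P_r$ closure under isomorphic copies of reduced (filtered) products $\prod_{i\in I}\mathbf A_i/F$, $F$ a filter on $I$. *)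

From mathcomp Require Import all_boot.
From Stdlib Require List.
Set Implicit Arguments. Unset Strict Implicit. Unset Printing Implicit Defensive.

Section UA.
Variables (F : Type) (ar : F -> nat).

Inductive term (V : Type) : Type :=
| Var : V -> term V
| App : forall f : F, ('I_(ar f) -> term V) -> term V.
Arguments Var {V}. Arguments App {V}.

Record algebra := Algebra {
  carrier :> Type;
  ops : forall f : F, ('I_(ar f) -> carrier) -> carrier }.
Arguments ops : clear implicits.

Fixpoint eval (A : algebra) (V : Type) (v : V -> carrier A) (t : term V) : carrier A :=
  match t with
  | Var x => v x
  | App f ts => ops A f (fun i => eval v (ts i))
  end.

Fixpoint subst (V W : Type) (s : V -> term W) (t : term V) : term W :=
  match t with
  | Var x => s x
  | App f ts => App f (fun i => subst s (ts i))
  end.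

(* A hypersubstitution assigns to each n-ary symbol an n-ary term,
   i.e. a term in the variables x_0, ..., x_{n-1}. *)
Definition hypersubst := forall f : F, term 'I_(ar f).

Fixpoint hyp (sigma : hypersubst) (V : Type) (t : term V) : term V :=
  match t with
  | Var x => Var x
  | App f ts => subst (fun i => hyp sigma (ts i)) (sigma f)
  end.

Definition derived (A : algebra) (sigma : hypersubst) : algebra :=
  @Algebra (carrier A) (fun f args => eval args (sigma f)).

Record quasi_identity := QI {
  qi_prem : seq (term nat * term nat);
  qi_concl : term nat * term nat }.

Definition qi_holds (A : algebra) (q : quasi_identity) : Prop :=
  forall v : nat -> carrier A,
    (forall p, List.In p (qi_prem q) -> eval v p.1 = eval v p.2) ->
    eval v (qi_concl q).1 = eval v (qi_concl q).2.

Definition qi_hyp (sigma : hypersubst) (q : quasi_identity) : quasi_identity :=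
  QI [seq (hyp sigma p.1, hyp sigma p.2) | p <- qi_prem q]
     (hyp sigma (qi_concl q).1, hyp sigma (qi_concl q).2).

Definition hypersatisfies (A : algebra) (q : quasi_identity) : Prop :=
  forall sigma : hypersubst, qi_holds A (qi_hyp sigma q).

Definition class := algebra -> Prop.

Definition HQ (K : class) : class := fun A =>
  forall q : quasi_identity,
    (forall B, K B -> hypersatisfies B q) -> hypersatisfies A q.

Definition Dcl (K : class) : class := fun A =>
  exists (B : algebra) (sigma : hypersubst), K B /\ A = derived B sigma.

Definition is_hom (A B : algebra) (h : carrier A -> carrier B) : Prop :=
  forall (f : F) (args : 'I_(ar f) -> carrier A),
    h (ops A f args) = ops B f (fun i => h (args i)).

(* S(K): isomorphic copies of subalgebras of members of K, i.e.
   algebras embeddable (injective homomorphism) into a member of K. *)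
Definition Scl (K : class) : class := fun A =>
  exists (B : algebra) (h : carrier A -> carrier B),
    K B /\ @is_hom A B h /\ injective h.

Definition is_filter (I : Type) (Fl : (I -> Prop) -> Prop) : Prop :=
  [/\ Fl (fun _ => True),
      (forall X Y : I -> Prop, Fl X -> (forall i, X i -> Y i) -> Fl Y)
    & (forall X Y : I -> Prop, Fl X -> Fl Y -> Fl (fun i => X i /\ Y i))].

Definition prod_ops (I : Type) (Ai : I -> algebra) (f : F)
  (args : 'I_(ar f) -> forall i, carrier (Ai i)) : forall i, carrier (Ai i) :=
  fun i => ops (Ai i) f (fun k => args k i).

(* P_r(K): isomorphic copies of reduced products prod_i A_i / Fl.
   A is such a copy iff there is a surjective map h from prod_i A_i onto A,
   compatible with the operations, whose kernel is exactly the
   congruence  x ~ y  <=>  {i | x i = y i} \in Fl. *)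
Definition Prcl (K : class) : class := fun A =>
  exists (I : Type) (Fl : (I -> Prop) -> Prop) (Ai : I -> algebra)
         (h : (forall i, carrier (Ai i)) -> carrier A),
    [/\ is_filter Fl,
        (forall i, K (Ai i)),
        (forall f args, h (@prod_ops I Ai f args) = ops A f (fun k => h (args k))),
        (forall a : carrier A, exists x, h x = a)
      & (forall x y, h x = h y <-> Fl (fun i => x i = y i))].

Definition trivial_alg (A : algebra) : Prop :=
  exists a : carrier A, forall b : carrier A, b = a.

Definition K0 (K : class) : class := fun A => K A \/ trivial_alg A.

End UA.

(* Quasi-identities are preserved by subalgebras and reduced products, and
   hypersatisfaction passes from an algebra to its derived algebras, which
   gives HQ(K) ⊇ SP_rD(K_0); trivial algebras satisfy everything.
   Conversely, let A ∈ HQ(K).  For a finite set Φ of entries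
   f(a_1,...,a_n) = a of the operation tables of A and a ≠ b, the
   quasi-identity "Φ → a = b" (elements read as variables) fails in A, hence
   in some derived algebra D of a member of K, under an assignment w.
   Indexing by all such (Φ, a, b) and reducing the product of the D's modulo
   the filter generated by "Φ contains Φ_0", the map a ↦ (w(a))_(Φ,a,b)
   becomes a homomorphism (each entry is eventually among the premises) and
   injective (a ≠ b is separated at the index (Φ_0, a, b)). *)
From mathcomp Require Import all_boot.
From Stdlib Require Import Classical ClassicalEpsilon FunctionalExtensionality.
From Stdlib Require Import ProofIrrelevance PropExtensionality.
From Stdlib Require List.
Set Implicit Arguments. Unset Strict Implicit. Unset Printing Implicit Defensive.

Section Terms.
Variables (F : Type) (ar : F -> nat).
Implicit Types (A B : algebra ar) (sigma tau : hypersubst ar).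

Lemma eval_subst A V W (v : W -> A) (s : V -> term ar W) (t : term ar V) :
  eval v (subst s t) = eval (fun x => eval v (s x)) t.
Proof.
elim: t => [x|f ts IH] //=; congr (@ops _ _ _ f _).
by apply: functional_extensionality => i; apply: IH.
Qed.

Lemma subst_subst V W U (s : V -> term ar W) (r : W -> term ar U) (t : term ar V) :
  subst r (subst s t) = subst (fun x => subst r (s x)) t.
Proof.
elim: t => [x|f ts IH] //=; congr (App _).
by apply: functional_extensionality => i; apply: IH.
Qed.

Lemma hyp_subst tau V W (s : V -> term ar W) (t : term ar V) :
  hyp tau (subst s t) = subst (fun x => hyp tau (s x)) (hyp tau t).
Proof.
elim: t => [x|f ts IH] //=; rewrite subst_subst; congr (subst _ _).
by apply: functional_extensionality => i; apply: IH.
Qed.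

Definition hcomp tau sigma : hypersubst ar := fun f => hyp tau (sigma f).

Lemma hyp_hcomp tau sigma V (t : term ar V) :
  hyp tau (hyp sigma t) = hyp (hcomp tau sigma) t.
Proof.
elim: t => [x|f ts IH] //=; rewrite hyp_subst; congr (subst _ _).
by apply: functional_extensionality => i; apply: IH.
Qed.

Lemma eval_derived B tau V (v : V -> B) (t : term ar V) :
  @eval _ _ (derived B tau) V v t = eval v (hyp tau t).
Proof.
elim: t => [x|f ts IH] //=; rewrite eval_subst; congr (eval _ _).
by apply: functional_extensionality => i; apply: IH.
Qed.

Lemma derived_hcomp B tau sigma :
  derived (derived B tau) sigma = derived B (hcomp tau sigma).
Proof.
congr (Algebra _); apply: functional_extensionality_dep => f.
by apply: functional_extensionality => args; apply: eval_derived.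
Qed.

Definition hid : hypersubst ar := fun f => App (fun k => Var ar k).

Lemma derived_hid A : derived A hid = A.
Proof. by case: A. Qed.

Lemma eval_hom A B (h : A -> B) V (v : V -> A) (t : term ar V) :
  is_hom h -> h (eval v t) = eval (fun x => h (v x)) t.
Proof.
move=> hom_h; elim: t => [x|f ts IH] //=; rewrite hom_h; congr (@ops _ _ _ f _).
by apply: functional_extensionality => i; apply: IH.
Qed.

Definition prod_alg (I : Type) (Ai : I -> algebra ar) : algebra ar :=
  Algebra (@prod_ops _ _ I Ai).

Lemma eval_prod I (Ai : I -> algebra ar) V (v : V -> prod_alg Ai) t i :
  (eval v t : prod_alg Ai) i = eval (fun x => v x i) t.
Proof.
elim: t => [x|f ts IH] //=; congr (@ops _ _ _ f _).
by apply: functional_extensionality => k; apply: IH.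
Qed.

End Terms.

Section Filters.
Variables (I : Type) (Fl : (I -> Prop) -> Prop).
Hypothesis filter_Fl : is_filter Fl.

Lemma filter_forall_In (T : Type) (s : seq T) (X : T -> I -> Prop) :
  (forall p, List.In p s -> Fl (X p)) -> Fl (fun i => forall p, List.In p s -> X p i).
Proof.
case: filter_Fl => FlT Fl_up FlI; elim: s => [|p s IH] Xs.
  by apply: (Fl_up _ _ FlT) => i _ p [].
apply: (Fl_up (fun i => X p i /\ (forall q, List.In q s -> X q i))).
  by apply: FlI; [apply: Xs; left | apply: IH => q sq; apply: Xs; right].
by move=> i [Xpi Xsi] q [<-|sq] //; apply: Xsi.
Qed.

Lemma In_enum_ord n (k : 'I_n) : List.In k (enum 'I_n).
Proof.
have : k \in enum 'I_n by rewrite mem_enum.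
elim: (enum 'I_n) => [|j s IH] //; rewrite in_cons => /orP [/eqP ->|sk].
  by left.
by right; apply: IH.
Qed.

Lemma filter_forall_ord n (X : 'I_n -> I -> Prop) :
  (forall k, Fl (X k)) -> Fl (fun i => forall k, X k i).
Proof.
move=> FlX; case: filter_Fl => _ Fl_up _.
apply: (Fl_up _ _ (filter_forall_In (s := enum 'I_n) (fun k _ => FlX k))).
by move=> i Xi k; apply: Xi; apply: In_enum_ord.
Qed.

End Filters.

Section ReducedProduct.
Variables (F : Type) (ar : F -> nat).

Lemma quotient_exists (T : Type) (R : T -> T -> Prop) :
  (forall x, R x x) -> (forall x y, R x y -> R y x) ->
  (forall x y z, R x y -> R y z -> R x z) ->
  exists (Q : Type) (q : T -> Q),
    (forall c, exists x, q x = c) /\ (forall x y, q x = q y <-> R x y).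
Proof.
move=> Rrefl Rsym Rtrans.
exists {P : T -> Prop | exists x, P = R x}, (fun x => exist _ (R x) (ex_intro _ x erefl)).
split=> [[P [x Px]]|x y]; first by exists x; apply: subset_eq_compat; rewrite Px.
split=> [/(congr1 (@proj1_sig _ _)) /= Rxy|Rxy].
  by rewrite Rxy; apply: Rrefl.
apply: subset_eq_compat; apply: functional_extensionality => z.
apply: propositional_extensionality.
by split=> Rz; [apply: Rtrans (Rsym _ _ Rxy) Rz | apply: Rtrans Rxy Rz].
Qed.

Variables (I : Type) (Fl : (I -> Prop) -> Prop) (Ai : I -> algebra ar).
Hypothesis filter_Fl : is_filter Fl.

Definition filter_eq (x y : prod_alg Ai) : Prop := Fl (fun i => x i = y i).

Lemma filter_eq_ops f (x y : 'I_(ar f) -> prod_alg Ai) :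
  (forall k, filter_eq (x k) (y k)) -> filter_eq (@prod_ops _ _ _ _ f x) (@prod_ops _ _ _ _ f y).
Proof.
move=> xy; case: (filter_Fl) => _ Fl_up _.
apply: (Fl_up _ _ (filter_forall_ord filter_Fl xy)) => i xyi.
by congr (@ops _ _ _ f _); apply: functional_extensionality.
Qed.

Lemma reduced_product_exists :
  exists (Q : algebra ar) (h : prod_alg Ai -> Q),
    [/\ (forall f args, h (@prod_ops _ _ _ _ f args) = @ops _ _ Q f (fun k => h (args k))),
        (forall a : Q, exists x, h x = a)
      & (forall x y, h x = h y <-> filter_eq x y)].
Proof.
case: (filter_Fl) => FlT Fl_up FlI.
have [Qc [q [q_surj q_ker]]] : exists (Qc : Type) (q : prod_alg Ai -> Qc),
    (forall c, exists x, q x = c) /\ (forall x y, q x = q y <-> filter_eq x y).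
  apply: quotient_exists => [x|x y|x y z].
  - exact: Fl_up FlT _.
  - by move=> xy; apply: Fl_up xy _.
  - by move=> xy yz; apply: Fl_up (FlI _ _ xy yz) _ => i [-> ->].
have [rep repK] := choice _ q_surj.
exists (Algebra (fun f (c : 'I_(ar f) -> Qc) => q (@prod_ops _ _ _ _ f (fun k => rep (c k))))), q.
split=> // f args /=; apply/q_ker/filter_eq_ops => k.
by apply/q_ker; rewrite repK.
Qed.

End ReducedProduct.

Section QuasiIdentities.
Variables (F : Type) (ar : F -> nat).
Implicit Types (A B : algebra ar) (q : quasi_identity ar) (L : class ar).

Definition qi_refutes A q (v : nat -> A) : Prop :=
  (forall p, List.In p (qi_prem q) -> eval v p.1 = eval v p.2) /\
  eval v (qi_concl q).1 <> eval v (qi_concl q).2.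

Lemma not_qi_holdsE A q : ~ qi_holds A q <-> exists v : nat -> A, qi_refutes q v.
Proof.
split=> [not_holds|[v [prem concl]] holds]; last exact/concl/holds.
apply: NNPP => no_refutation; apply: not_holds => v prem.
by apply: NNPP => concl; apply: no_refutation; exists v.
Qed.

Lemma qi_holds_derived A sigma q :
  qi_holds (derived A sigma) q <-> qi_holds A (qi_hyp sigma q).
Proof.
rewrite /qi_holds /=; split=> holds v prem.
- rewrite -!eval_derived; apply: holds => p qp; rewrite !eval_derived.
  by apply: (prem (hyp sigma p.1, hyp sigma p.2)); apply/List.in_map_iff; exists p.
- rewrite !eval_derived; apply: holds => _ /List.in_map_iff [p [<- qp]] /=.
  by rewrite -!eval_derived; apply: prem.
Qed.

Lemma hypersatisfies_derived B tau q :
  hypersatisfies B q -> hypersatisfies (derived B tau) q.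
Proof.
move=> Bq sigma; apply/(qi_holds_derived (derived B tau) sigma).
by rewrite derived_hcomp; apply/qi_holds_derived.
Qed.

Lemma hypersatisfies_qi_holds A q : hypersatisfies A q -> qi_holds A q.
Proof. by move=> Aq; rewrite -(derived_hid A); apply/qi_holds_derived. Qed.

Lemma qi_holds_trivial A q : trivial_alg A -> qi_holds A q.
Proof. by move=> [a0 allA] v _; rewrite [LHS]allA [RHS]allA. Qed.

Lemma hypersatisfies_DK0 K q A :
  (forall B, K B -> hypersatisfies B q) -> Dcl (K0 K) A -> hypersatisfies A q.
Proof.
move=> Kq [B [tau [[KB|trivB] ->]]]; first exact/hypersatisfies_derived/Kq.
by move=> sigma; apply: qi_holds_trivial.
Qed.

Lemma qi_holds_S L q A : (forall B, L B -> qi_holds B q) -> Scl L A -> qi_holds A q.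
Proof.
move=> Lq [B [h [LB [hom_h inj_h]]]] v prem; apply: inj_h.
rewrite !(eval_hom _ _ hom_h); apply: (Lq _ LB) => p qp.
by rewrite -!(eval_hom _ _ hom_h) (prem p qp).
Qed.

Lemma qi_holds_Pr L q A : (forall B, L B -> qi_holds B q) -> Prcl L A -> qi_holds A q.
Proof.
move=> Lq [I [Fl [Ai [h [filter_Fl LAi hom_h h_surj h_ker]]]]] v prem.
have [g gK] := choice _ h_surj.
pose w n : prod_alg Ai := g (v n).
have evalE t : eval v t = h (eval w t).
  rewrite (eval_hom _ _ (hom_h : @is_hom _ _ (prod_alg Ai) A h)).
  by congr (eval _ _); apply: functional_extensionality => n; rewrite gK.
have prem_w : Fl (fun i => forall p, List.In p (qi_prem q) -> eval w p.1 i = eval w p.2 i).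
  by apply: filter_forall_In => // p qp; apply/h_ker; rewrite -!evalE; apply: prem.
case: (filter_Fl) => _ Fl_up _.
rewrite !evalE; apply/h_ker; apply: Fl_up prem_w _ => i premi.
by rewrite !eval_prod; apply: (Lq _ (LAi i)) => p qp; rewrite -!eval_prod; apply: premi.
Qed.

End QuasiIdentities.

Section DiagramEmbedding.
Variables (F : Type) (ar : F -> nat) (K : class ar) (A : algebra ar).

Fixpoint index_of (l : list A) (e : A) : nat :=
  match l with
  | nil => 0
  | y :: l' => if excluded_middle_informative (e = y) then 0 else (index_of l' e).+1
  end.

Lemma nth_index_of l e d : List.In e l -> List.nth (index_of l e) l d = e.
Proof.
elim: l => [|y l IH] //= le; case: excluded_middle_informative => [ey|ney] /=; first by rewrite ey.
by apply: IH; case: le => // ey; case: ney.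
Qed.

Definition op_entry := {f : F & 'I_(ar f) -> A}.

Definition entry_elems (p : op_entry) : list A :=
  let: existT f args := p in @ops _ _ A f args :: map args (enum 'I_(ar f)).

Definition diagram_vars (Phi : seq op_entry) (a b : A) : list A :=
  a :: b :: List.flat_map entry_elems Phi.

(* Elements of A are read as variables via their position in [l]. *)
Definition entry_eqn (l : list A) (p : op_entry) : term ar nat * term ar nat :=
  let: existT f args := p in
  (App (fun k => Var ar (index_of l (args k))), Var ar (index_of l (@ops _ _ A f args))).

Definition diagram_qi (Phi : seq op_entry) (a b : A) : quasi_identity ar :=
  let l := diagram_vars Phi a b in
  QI (map (entry_eqn l) Phi) (Var ar (index_of l a), Var ar (index_of l b)).

Lemma entry_eqn_holds (l : list A) (d : A) f (args : 'I_(ar f) -> A) :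
  List.In (@ops _ _ A f args) l -> (forall k, List.In (args k) l) ->
  let v n := List.nth n l d in
  eval v (entry_eqn l (existT _ f args)).1 = eval v (entry_eqn l (existT _ f args)).2.
Proof.
move=> ops_l args_l /=; rewrite nth_index_of //; congr (@ops _ _ _ f _).
by apply: functional_extensionality => k; apply/nth_index_of/args_l.
Qed.

Lemma diagram_qi_refuted Phi a b :
  a <> b -> qi_refutes (diagram_qi Phi a b) (fun n => List.nth n (diagram_vars Phi a b) a).
Proof.
set l := diagram_vars Phi a b => neq_ab.
split=> [_ /List.in_map_iff [[f args] [<- Phi_fa]]|].
  apply: entry_eqn_holds => [|k]; right; right; apply/List.in_flat_map;
    exists (existT _ f args); split=> //; first by left.
  by right; apply/List.in_map_iff; exists k; split=> //; apply: In_enum_ord.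
change (List.nth (index_of l a) l a <> List.nth (index_of l b) l a).
by rewrite !nth_index_of //; [right; left | left].
Qed.

Hypothesis HQ_A : HQ K A.

Lemma diagram_refuted_in_DK Phi a b : a <> b ->
  exists w : {D : algebra ar & nat -> D},
    Dcl K (projT1 w) /\ qi_refutes (diagram_qi Phi a b) (projT2 w).
Proof.
set q := diagram_qi Phi a b => neq_ab.
have not_hyp_A : ~ hypersatisfies A q.
  move/hypersatisfies_qi_holds; apply/not_qi_holdsE.
  by eexists; apply: diagram_qi_refuted.
have [B not_hyp_B] := not_all_ex_not _ _ (fun Kq => not_hyp_A (HQ_A Kq)).
have [KB /not_all_ex_not [sigma not_hyp_sigma]] := imply_to_and _ _ not_hyp_B.
have [v refuted] : exists v : nat -> derived B sigma, qi_refutes q v.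
  by apply/(not_qi_holdsE (derived B sigma)) => /qi_holds_derived.
by exists (existT _ (derived B sigma) v); split=> //; exists B, sigma.
Qed.

Record diagram_index := DiagramIndex {
  entries : seq op_entry; elt_l : A; elt_r : A; elt_l_neq_r : elt_l <> elt_r }.

Definition index_vars (i : diagram_index) := diagram_vars (entries i) (elt_l i) (elt_r i).

Definition witness (i : diagram_index) : {D : algebra ar & nat -> D} :=
  proj1_sig (constructive_indefinite_description _
    (diagram_refuted_in_DK (entries i) (@elt_l_neq_r i))).

Definition factor (i : diagram_index) : algebra ar := projT1 (witness i).

Definition factor_assign (i : diagram_index) : nat -> factor i := projT2 (witness i).

Lemma factorP i : Dcl K (factor i) /\
  qi_refutes (diagram_qi (entries i) (elt_l i) (elt_r i)) (factor_assign i).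
Proof. by rewrite /factor /factor_assign /witness; case: constructive_indefinite_description. Qed.

Definition diagram_filter (X : diagram_index -> Prop) : Prop :=
  exists Phi0, forall i, List.incl Phi0 (entries i) -> X i.

Lemma diagram_filter_is_filter : is_filter diagram_filter.
Proof.
split=> [|X Y [Phi0 X0] XY|X Y [Phi0 X0] [Phi1 Y1]]; first by exists nil.
  by exists Phi0 => i /X0 /XY.
exists (Phi0 ++ Phi1)%list => i /List.incl_app_inv [in0 in1].
by split; [apply: X0 | apply: Y1].
Qed.

Definition diagram_embed (a : A) : prod_alg factor :=
  fun i => factor_assign i (index_of (index_vars i) a).

Lemma diagram_embed_ops f (args : 'I_(ar f) -> A) :
  filter_eq diagram_filter (diagram_embed (@ops _ _ A f args))
    (@prod_ops _ _ _ _ f (fun k => diagram_embed (args k))).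
Proof.
exists [:: existT _ f args] => i /(_ _ (or_introl erefl)) Phi_fa.
have [_ [prem _]] := factorP i.
symmetry; apply: (prem (entry_eqn (index_vars i) (existT _ f args))).
by apply/List.in_map_iff; exists (existT _ f args).
Qed.

Lemma diagram_embed_separates a b :
  filter_eq diagram_filter (diagram_embed a) (diagram_embed b) -> a = b.
Proof.
move=> [Phi0 eq_ab]; apply: NNPP => neq_ab.
have [_ [_ concl]] := factorP (DiagramIndex Phi0 neq_ab).
exact/concl/eq_ab/List.incl_refl.
Qed.

Lemma HQ_sub_SPrD : Scl (Prcl (Dcl (K0 K))) A.
Proof.
have [Q [h [hom_h h_surj h_ker]]] :=
  reduced_product_exists factor diagram_filter_is_filter.
exists Q, (fun a => h (diagram_embed a)); split; [|split].
- exists diagram_index, diagram_filter, factor, h; split=> //.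
    exact: diagram_filter_is_filter.
  move=> i; have [[B [sigma [KB factorE]]] _] := factorP i.
  by exists B, sigma; split=> //; left.
- by move=> f args; rewrite -hom_h; apply/h_ker/diagram_embed_ops.
- by move=> a b /h_ker /diagram_embed_separates.
Qed.

End DiagramEmbedding.

Theorem theorem5p6 (F : Type) (ar : F -> nat) (K : algebra ar -> Prop) :
  forall A : algebra ar, HQ K A <-> Scl (Prcl (Dcl (K0 K))) A.
Proof.
move=> A; split; first exact: HQ_sub_SPrD.
move=> SPrD_A q Kq sigma.
apply: (qi_holds_S _ SPrD_A) => B PrD_B; apply: (qi_holds_Pr _ PrD_B) => C DK0_C.
exact: hypersatisfies_DK0 Kq DK0_C sigma.
Qed.
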